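(* (i) The ring homomorphism $$\phi:K\langle\mathbf x,\mathbf y\rangle^\dagger\to L^{\dagger\prime},\qquad\sum_{\mathbf v\in\mathbb Z^N_{\ge0}}f_{\mathbf v}(\mathbf x)\mathbf y^{\mathbf v}\mapsto\sum_{\mathbf v\in\mathbb Z^N_{\ge0}}f_{\mathbf v}(\mathbf x)\mathbf t^{v_1\mathbf w_1+\cdots+v_N\mathbf w_N}$$ is surjective. (ii) The homomorphism of left $\mathcal D^\dagger$-modules $$\varphi:\mathcal D^\dagger\to L^{\dagger\prime},\qquad\sum_{\mathbf v}f_{\mathbf v}(\mathbf x)\frac{\partial^{\mathbf v}}{\pi^{|\mathbf v|}}\mapsto\Big(\sum_{\mathbf v}f_{\mathbf v}(\mathbf x)\frac{\partial^{\mathbf v}}{\pi^{|\mathbf v|}}\Big)\cdot1=\sum_{\mathbf v}f_{\mathbf v}(\mathbf x)\mathbf t^{v_1\mathbf w_1+\cdots+v_N\mathbf w_N}$$ is surjective.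
   Context: Let $\mathbf w_1,\dots,\mathbf w_N\in\mathbb Z^n$ be the columns of an $n\times N$ integer matrix of rank $n$. $p$ a prime, $K$ a finite extension of $\mathbb Q_p$ containing $\pi$ with $\pi^{p-1}+p=0$, $|a|=p^{-\mathrm{ord}_p(a)}$. Multi-index notation $\mathbf x^{\mathbf v}$, $\mathbf y^{\mathbf v}$, $\mathbf t^{\mathbf w}$, $|\mathbf v|=\sum v_j$, $\partial^{\mathbf v}=\prod(\partial/\partial x_j)^{v_j}$. For $r>0$, $K\{r^{-1}\mathbf x\}$ = power series $\sum a_{\mathbf v}\mathbf x^{\mathbf v}$ with $|a_{\mathbf v}|r^{|\mathbf v|}$ bounded, norm $\|\cdot\|_r=\sup|a_{\mathbf v}|r^{|\mathbf v|}$. $K\langle\mathbf x,\mathbf y\rangle^\dagger=\bigcup_{r>1,s>1}\{\sum_{\mathbf v}f_{\mathbf v}(\mathbf x)\mathbf y^{\mathbf v}:f_{\mathbf v}\in K\{r^{-1}\mathbf x\},\ \|f_{\mathbf v}\|_rs^{|\mathbf v|}\text{ bounded}\}$. $\Delta$ = convex hull of $\{0,\mathbf w_j\}$, $\delta$ = cone generated by the $\mathbf w_j$, $d(\mathbf w)=\inf\{a>0:\mathbf w\in a\Delta\}$, $C(A)=\{\sum k_j\mathbf w_j:k_j\in\mathbb Z_{\ge0}\}$, $L^{\dagger\prime}=\bigcup_{r>1,s>1}\{\sum_{\mathbf w\in C(A)}a_{\mathbf w}(\mathbf x)\mathbf t^{\mathbf w}:a_{\mathbf w}\in K\{r^{-1}\mathbf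 x\},\ \|a_{\mathbf w}\|_rs^{d(\mathbf w)}\text{ bounded}\}$. $\mathcal D^\dagger=\bigcup_{r>1,s>1}\{\sum_{\mathbf v}f_{\mathbf v}(\mathbf x)\partial^{\mathbf v}/\pi^{|\mathbf v|}:f_{\mathbf v}\in K\{r^{-1}\mathbf x\},\ \|f_{\mathbf v}\|_rs^{|\mathbf v|}\text{ bounded}\}$; $L^{\dagger\prime}$ is a left $\mathcal D^\dagger$-module with $\partial/\partial x_j$ acting by $\partial/\partial x_j+\pi\mathbf t^{\mathbf w_j}$. *)

From HB Require Import structures.
From mathcomp Require Import all_boot all_order all_algebra.
From mathcomp Require Import classical_sets reals exp.
Set Implicit Arguments. Unset Strict Implicit. Unset Printing Implicit Defensive.
Import Order.TTheory GRing.Theory Num.Theory.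
Local Open Scope ring_scope.
Local Open Scope classical_set_scope.

Section Defs.
Variables (R : realType) (K : fieldType) (nrm : K -> R).

(* Realized as: a field K with a non-archimedean absolute value nrm extending the
   normalized p-adic absolute value (|p| = 1/p), complete, discretely valued, with
   finite residue field.  (These are exactly the finite extensions of Q_p with the
   unique extension of the p-adic absolute value.) *)
Definition nrm_abs_value :=
  [/\ forall x : K, 0 <= nrm x,
      forall x : K, nrm x = 0 <-> x = 0,
      forall x y : K, nrm (x * y) = nrm x * nrm y &
      forall x y : K, nrm (x + y) <= Num.max (nrm x) (nrm y)].

Definition nrm_cauchy (u : nat -> K) :=
  forall e : R, 0 < e -> exists M : nat,
    forall m k : nat, (M <= m)%N -> (M <= k)%N -> nrm (u m - u k) < e.

Definition nrm_converges (u : nat -> K) (l : K) :=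
  forall e : R, 0 < e -> exists M : nat, forall m : nat, (M <= m)%N -> nrm (u m - l) < e.

Definition nrm_complete :=
  forall u : nat -> K, nrm_cauchy u -> exists l : K, nrm_converges u l.

Definition nrm_discrete :=
  exists varpi : K, 0 < nrm varpi < 1 /\
    forall x : K, x != 0 -> exists z : int, nrm x = nrm varpi ^ z.

Definition nrm_finite_residue_field :=
  exists S : seq K, all (fun s => nrm s <= 1) S /\
    forall x : K, nrm x <= 1 -> exists2 s, s \in S & nrm (x - s) < 1.

Definition is_finite_ext_Qp (p : nat) :=
  [/\ nrm_abs_value, nrm p%:R = (p%:R)^-1, nrm_complete,
      nrm_discrete & nrm_finite_residue_field].

Definition has_sum (I : eqType) (P : I -> Prop) (f : I -> K) (l : K) :=
  forall e : R, 0 < e -> exists S : seq I, (forall i, i \in S -> P i) /\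
    forall T : seq I, uniq T -> (forall i, i \in T -> P i) -> {subset S <= T} ->
      nrm (\sum_(i <- T) f i - l) < e.

End Defs.

Definition mono (m : nat) := {ffun 'I_m -> nat}.
Definition mdeg (m : nat) (v : mono m) : nat := (\sum_(i < m) v i)%N.

(* v_1 w_1 + ... + v_N w_N, where w_j is the j-th column of A *)
Definition expo (n N : nat) (A : 'M[int]_(n, N)) (v : mono N) : 'cV[int]_n :=
  \col_i \sum_(j < N) ((v j)%:Z * A i j).

Definition in_CA (n N : nat) (A : 'M[int]_(n, N)) (w : 'cV[int]_n) :=
  exists v : mono N, expo A v = w.

(* w in a*Delta, Delta = convex hull of {0, w_1, ..., w_N} in R^n *)
Definition in_scaled_Delta (R : realType) (n N : nat) (A : 'M[int]_(n, N))
    (a : R) (w : 'cV[int]_n) :=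
  exists lam : 'I_N -> R, (forall j, 0 <= lam j) /\ \sum_j lam j <= a /\
    forall i, (w i ord0)%:~R = \sum_j lam j * (A i j)%:~R.

Definition dA (R : realType) (n N : nat) (A : 'M[int]_(n, N)) (w : 'cV[int]_n) : R :=
  inf [set a : R | 0 < a /\ in_scaled_Delta A a w].

Section Spaces.
Variables (R : realType) (K : fieldType) (nrm : K -> R) (n N : nat) (A : 'M[int]_(n, N)).

(* An element sum_v f_v(x) y^v of K<x,y>^dagger is given by F with
   F u v = coefficient of x^u in f_v(x).  The condition
   "f_v in K{r^{-1}x}, ||f_v||_r s^{|v|} bounded" is written out. *)
Definition in_Kxy_dagger (F : mono N -> mono N -> K) :=
  exists r s C : R, 1 < r /\ 1 < s /\
    forall u v, nrm (F u v) * r ^+ mdeg u * s ^+ mdeg v <= C.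

(* An element sum_v f_v(x) d^v / pi^{|v|} of D^dagger is given by P with
   P u v = coefficient of x^u in f_v(x). *)
Definition in_D_dagger (P : mono N -> mono N -> K) :=
  exists r s C : R, 1 < r /\ 1 < s /\
    forall u v, nrm (P u v) * r ^+ mdeg u * s ^+ mdeg v <= C.

(* An element sum_{w in C(A)} a_w(x) t^w of L^{dagger'} is given by G with
   G u w = coefficient of x^u in a_w(x) (values for w outside C(A) are irrelevant). *)
Definition in_L_dagger (G : mono N -> 'cV[int]_n -> K) :=
  exists r s C : R, 1 < r /\ 1 < s /\
    forall u w, in_CA A w -> nrm (G u w) * r ^+ mdeg u * s `^ (dA R A w) <= C.

Definition phi_maps_to (F : mono N -> mono N -> K) (G : mono N -> 'cV[int]_n -> K) :=
  forall u w, in_CA A w -> has_sum nrm (fun v : mono N => expo A v = w) (fun v => F u v) (G u w).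

(* varphi(P) = P . 1 = sum_v f_v(x) t^{v_1 w_1 + ... + v_N w_N} *)
Definition varphi_maps_to (P : mono N -> mono N -> K) (G : mono N -> 'cV[int]_n -> K) :=
  forall u w, in_CA A w -> has_sum nrm (fun v : mono N => expo A v = w) (fun v => P u v) (G u w).

End Spaces.

From HB Require Import structures.
From mathcomp Require Import all_boot all_order all_algebra.
From mathcomp Require Import classical_sets reals exp.
From mathcomp Require Import boolp zify.
Set Implicit Arguments. Unset Strict Implicit. Unset Printing Implicit Defensive.
Import Order.TTheory GRing.Theory Num.Theory.
Local Open Scope ring_scope.

(* The norm of L^{dagger'} weighs t^w by s^{d(w)} and that of K<x,y>^dagger
   weighs y^v by s^{|v|}.  So it suffices to choose, for every w in C(A), one
   v with w = sum v_j w_j and |v| <= c + d(w) for a constant c, and to send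
   G = sum a_w t^w to the series carrying a_w on the chosen y^v.  To find v,
   write w = sum lam_j w_j with sum lam_j <= d(w) + 1 and k = floor lam: the
   residue rho = w - sum k_j w_j is bounded, so it ranges over a finite set.
   For fixed rho the k with rho + sum k_j w_j in C(A) form an upward-closed
   set of multi-indices, which by Dickson's lemma has finitely many minimal
   elements m; a representation of rho + sum m_j w_j plus k - m represents
   rho + sum k_j w_j with degree at most a constant plus |k| <= d(w) + 1. *)

Lemma uniform_bound_fin (T : finType) (Q : T -> nat -> Prop) :
  (forall t c c', (c <= c')%N -> Q t c -> Q t c') ->
  (forall t, exists c, Q t c) -> exists c, forall t, Q t c.
Proof.
move=> Qmono /choice[f Qf]; exists (\max_t f t)%N => t.
by apply: Qmono (Qf t); apply: leq_bigmax.
Qed.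

Section Dickson.
Variable N : nat.
Implicit Types (k m : mono N) (U : mono N -> Prop).

Definition mono_le k m := forall i, (k i <= m i)%N.

Definition upward_closed U := forall k m, U k -> mono_le k m -> U m.

Definition depends_only_on (S : {set 'I_N}) U :=
  forall k m, (forall i, i \in S -> k i = m i) -> U k -> U m.

Definition basis_bound U (c : nat) :=
  forall k, U k -> exists m, [/\ U m, mono_le m k & forall i, (m i <= c)%N].

Definition mono_upd k (i : 'I_N) (t : nat) : mono N :=
  [ffun j => if j == i then t else k j].

Lemma basis_bound_le U c c' : (c <= c')%N -> basis_bound U c -> basis_bound U c'.
Proof.
move=> lecc' Uc k /Uc[m [Um lemk mc]]; exists m; split=> // i.
exact: leq_trans (mc i) lecc'.
Qed.

Lemma mono_upd_id k i : mono_upd k i (k i) = k.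
Proof. by apply/ffunP => j; rewrite ffunE; case: eqP => [->|]. Qed.

Lemma mono_upd_le m k i : mono_le m k -> mono_le (mono_upd m i (k i)) k.
Proof. by move=> lemk j; rewrite ffunE; case: eqP => [->|]. Qed.

Lemma upward_closed_upd U i t :
  upward_closed U -> upward_closed (fun k => U (mono_upd k i t)).
Proof. by move=> Uup k m Uk lekm; apply: Uup Uk _ => j; rewrite !ffunE; case: eqP. Qed.
Arguments upward_closed_upd {U} i t.

Lemma depends_only_on_upd S U i t : depends_only_on S U ->
  depends_only_on (S :\ i) (fun k => U (mono_upd k i t)).
Proof.
move=> Udep k m eqkm; apply: Udep => j jS; rewrite !ffunE.
by case: eqP => // /eqP ji; apply: eqkm; rewrite in_setD1 ji.
Qed.
Arguments depends_only_on_upd {S U} i t.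

(* Induction on the number of coordinates U depends on: an element u of U
   supported on S either lies below k, or some k_i < u_i for an i in S, and
   then fixing the i-th coordinate to one of finitely many values removes a
   coordinate. *)
Lemma dickson_on S U :
  upward_closed U -> depends_only_on S U -> exists c, basis_bound U c.
Proof.
have [s leS] : exists s, (#|S| < s)%N by exists #|S|.+1.
elim: s S leS U => [//|s IHs] S leS U Uup Udep.
have [[u0 Uu0]|noU] := pselect (exists k, U k); last first.
  by exists 0%N => k Uk; case: noU; exists k.
pose u : mono N := [ffun i => if i \in S then u0 i else 0%N].
have Uu : U u by apply: Udep Uu0 => i iS; rewrite ffunE iS.
pose b := (\max_i u i)%N.
have [c upd_c] : exists c, forall it : 'I_N * 'I_b.+1,
    it.1 \in S -> basis_bound (fun k => U (mono_upd k it.1 it.2)) c.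
  apply: uniform_bound_fin => [it c c' lecc' Hc /Hc|[i t]]; first exact: basis_bound_le.
  have [iS|] := boolP (i \in S); last by exists 0%N.
  have [|c Hc] := IHs (S :\ i) _ _ (upward_closed_upd i t Uup)
    (depends_only_on_upd i t Udep).
    by move: leS; rewrite (cardsD1 i S) iS.
  by exists c.
exists (maxn c b) => k Uk.
have [[i lt_ki]|ge_ku] := pselect (exists i, (k i < u i)%N); last first.
  exists u; split=> // i; last by rewrite leq_max leq_bigmax orbT.
  by rewrite leqNgt; apply/negP => lt_ki; apply: ge_ku; exists i.
have iS : i \in S by move: lt_ki; rewrite ffunE; case: (i \in S).
have le_kib : (k i <= b)%N by rewrite ltnW // (leq_trans lt_ki) ?leq_bigmax.
have := upd_c (i, Ordinal (le_kib : (k i < b.+1)%N)) iS k.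
rewrite /= mono_upd_id => /(_ Uk)[m [Um lemk mc]].
exists (mono_upd m i (k i)); split=> //; first exact: mono_upd_le.
by move=> j; rewrite ffunE; case: eqP => _; rewrite leq_max ?mc ?le_kib ?orbT.
Qed.

Lemma dickson U : upward_closed U -> exists c, basis_bound U c.
Proof.
move=> Uup; apply: (@dickson_on [set: 'I_N]%SET) => // k m eqkm.
by have -> : m = k by apply/ffunP => i; rewrite eqkm ?in_setT.
Qed.

End Dickson.

Section Representations.
Variables (n N : nat) (A : 'M[int]_(n, N)).
Implicit Types (k m v : mono N) (w rho : 'cV[int]_n).

Definition mono_add v v' : mono N := [ffun j => (v j + v' j)%N].
Definition mono_sub v v' : mono N := [ffun j => (v j - v' j)%N].

Lemma expo_add v v' : expo A (mono_add v v') = expo A v + expo A v'.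
Proof.
apply/matrixP => i j; rewrite !mxE -big_split; apply: eq_bigr => l _.
by rewrite ffunE PoszD mulrDl.
Qed.

Lemma mdeg_add v v' : mdeg (mono_add v v') = (mdeg v + mdeg v')%N.
Proof. by rewrite /mdeg -big_split; apply: eq_bigr => l _; rewrite ffunE. Qed.

Lemma mono_subK m k : mono_le m k -> mono_add m (mono_sub k m) = k.
Proof. by move=> lemk; apply/ffunP => j; rewrite !ffunE subnKC. Qed.

Lemma mdeg_sub_le k m : (mdeg (mono_sub k m) <= mdeg k)%N.
Proof. by apply: leq_sum => j _; rewrite ffunE leq_subr. Qed.

Definition has_rep_le w (c : nat) := exists v, expo A v = w /\ (mdeg v <= c)%N.

Lemma has_rep_le_trans w c c' : (c <= c')%N -> has_rep_le w c -> has_rep_le w c'.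
Proof. by move=> lecc' [v [vw levc]]; exists v; split=> //; apply: leq_trans lecc'. Qed.

Lemma has_rep_le_fin (T : finType) (f : T -> 'cV[int]_n) :
  exists c, forall t, in_CA A (f t) -> has_rep_le (f t) c.
Proof.
apply: uniform_bound_fin => [t c c' lecc' Hc /Hc|t]; first exact: has_rep_le_trans.
have [[v vt]|notCA] := pselect (in_CA A (f t)); last by exists 0%N.
by exists (mdeg v) => _; exists v.
Qed.

Lemma upward_closed_in_CA_shift w : upward_closed (fun k => in_CA A (w + expo A k)).
Proof.
move=> k k' [v vw] lekk'; exists (mono_add v (mono_sub k' k)).
by rewrite expo_add vw -addrA -expo_add mono_subK.
Qed.

(* Dickson's lemma reduces the representations of rho + sum k_j w_j to those
   of the finitely many rho + sum m_j w_j with m bounded. *)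
Lemma has_rep_le_shift rho : exists c, forall k,
  in_CA A (rho + expo A k) -> has_rep_le (rho + expo A k) (c + mdeg k).
Proof.
have [b Ub] := dickson (@upward_closed_in_CA_shift rho).
pose box (t : {ffun 'I_N -> 'I_b.+1}) : mono N := [ffun j => nat_of_ord (t j)].
have [c Hc] := has_rep_le_fin (fun t => rho + expo A (box t)).
exists c => k /Ub[m [CAm lemk mb]].
have boxm : box [ffun j => inord (m j)] = m.
  by apply/ffunP => j; rewrite !ffunE inordK // ltnS.
have [v [vm degv]] : has_rep_le (rho + expo A m) c.
  by rewrite -boxm; apply: Hc; rewrite boxm.
exists (mono_add v (mono_sub k m)); split.
  by rewrite expo_add vm -addrA -expo_add mono_subK.
by rewrite mdeg_add leq_add // mdeg_sub_le.
Qed.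

Lemma has_rep_le_shift_box (M : nat) : exists c, forall rho,
  (forall i, `|rho i ord0| <= M%:Z) -> forall k,
  in_CA A (rho + expo A k) -> has_rep_le (rho + expo A k) (c + mdeg k).
Proof.
pose box (t : {ffun 'I_n -> 'I_(M.*2.+1)}) : 'cV[int]_n := \col_i ((t i)%:Z - M%:Z).
have [c Hc] : exists c, forall t k, in_CA A (box t + expo A k) ->
    has_rep_le (box t + expo A k) (c + mdeg k).
  apply: uniform_bound_fin => [t c c' lecc' Hc k /Hc|t]; last exact: has_rep_le_shift.
  by apply: has_rep_le_trans; rewrite leq_add2r.
exists c => rho rhoM.
suff -> : rho = box [ffun i => inord (absz (rho i ord0 + M%:Z))] by apply: Hc.
apply/matrixP => i j; rewrite (ord1 j) !mxE ffunE.
have := rhoM i; rewrite ler_norml; move: (rho i ord0) => x xM.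
rewrite inordK; lia.
Qed.

End Representations.

Section ShortRepresentations.
Variables (R : realType) (n N : nat) (A : 'M[int]_(n, N)).
Implicit Types (w : 'cV[int]_n) (lam : 'I_N -> R).

Lemma in_scaled_Delta_le (a b : R) w :
  a <= b -> in_scaled_Delta A a w -> in_scaled_Delta A b w.
Proof.
move=> leab [lam [lam0 [lama lamw]]]; exists lam; split=> //; split=> //.
exact: le_trans leab.
Qed.

Lemma in_scaled_Delta_mdeg v : in_scaled_Delta A ((mdeg v)%:R : R) (expo A v).
Proof.
exists (fun j => (v j)%:R); split=> [j|]; first by rewrite ler0n.
split; first by rewrite /mdeg natr_sum.
move=> i; rewrite mxE rmorph_sum /=; apply: eq_bigr => j _.
by rewrite intrM.
Qed.

Lemma in_scaled_Delta_dA w : in_CA A w -> in_scaled_Delta A (dA R A w + 1) w.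
Proof.
move=> [v <-]; rewrite /dA; set E := [set _ : R | _]%classic.
have Ev : E ((mdeg v)%:R + 1).
  split; first by rewrite ltr_wpDl.
  by apply: in_scaled_Delta_le (in_scaled_Delta_mdeg v); rewrite lerDl.
have [|a [_ Ea] lt_a] := @inf_adherent _ E 1 ltr01.
  by split; [exists ((mdeg v)%:R + 1) | exists 0 => a [/ltW]].
exact: in_scaled_Delta_le (ltW lt_a) Ea.
Qed.

Definition mono_floor lam : mono N := [ffun j => Num.truncn (lam j)].

Lemma mdeg_floor_le lam :
  (forall j, 0 <= lam j) -> (mdeg (mono_floor lam))%:R <= \sum_j lam j.
Proof.
move=> lam0; rewrite /mdeg natr_sum; apply: ler_sum => j _.
by rewrite ffunE; case/andP: (truncn_itv (lam0 j)).
Qed.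

Lemma floor_residue_le lam w : (forall j, 0 <= lam j) ->
  (forall i, (w i ord0)%:~R = \sum_j lam j * (A i j)%:~R) ->
  forall i, `|(w - expo A (mono_floor lam)) i ord0| <= (\sum_j absz (A i j))%N%:Z.
Proof.
move=> lam0 lamw i; rewrite -(ler_int R) intr_norm.
have -> : ((w - expo A (mono_floor lam)) i ord0)%:~R
    = \sum_j (lam j - (mono_floor lam j)%:R) * (A i j)%:~R :> R.
  rewrite !mxE intrB lamw rmorph_sum /= -sumrB; apply: eq_bigr => j _.
  by rewrite intrM mulrBl.
rewrite -pmulrn natr_sum; apply: le_trans (ler_norm_sum _ _ _) _.
apply: ler_sum => j _; rewrite natr_absz intr_norm normrM ler_piMl //.
have /andP[fl0 fl1] : 0 <= lam j - (mono_floor lam j)%:R < 1.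
  by rewrite ffunE subr_ge0 ltrBlDl natr1; exact: truncn_itv (lam0 j).
by rewrite ger0_norm // ltW.
Qed.

Lemma short_representation : exists c : nat, forall w, in_CA A w ->
  exists v, expo A v = w /\ (mdeg v)%:R <= c%:R + dA R A w.
Proof.
pose M := (\max_i \sum_j absz (A i j))%N.
have [c Hc] := has_rep_le_shift_box A M.
exists c.+1 => w CAw.
have [lam [lam0 [lamS lamw]]] := in_scaled_Delta_dA CAw.
set k := mono_floor lam.
have rhoM i : `|(w - expo A k) i ord0| <= M%:Z.
  by apply: le_trans (floor_residue_le lam0 lamw i) _; rewrite lez_nat leq_bigmax.
have [|v [vw degv]] := Hc _ rhoM k; first by rewrite subrK.
exists v; split; first by rewrite vw subrK.
apply: le_trans (_ : (c + mdeg k)%N%:R <= _); first by rewrite ler_nat.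
rewrite -addn1 !natrD -addrA lerD2l addrC.
exact: le_trans (mdeg_floor_le lam0) lamS.
Qed.

End ShortRepresentations.

Section Surjectivity.
Variables (R : realType) (K : fieldType) (nrm : K -> R).
Hypothesis nrm_abs : nrm_abs_value nrm.

Lemma nrm0 : nrm 0 = 0.
Proof. by case: nrm_abs => _ nrm_eq0 _ _; apply/nrm_eq0. Qed.

Lemma has_sum_single (I : eqType) (P : I -> Prop) (f : I -> K) i0 :
  P i0 -> (forall i, P i -> i != i0 -> f i = 0) -> has_sum nrm P f (f i0).
Proof.
move=> Pi0 f0 e e0; exists [:: i0].
split=> [i|T uT PT sT]; first by rewrite inE => /eqP ->.
rewrite (bigD1_seq i0) ?sT ?mem_head //= big_seq_cond big1 ?addr0 ?subrr ?nrm0 //.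
by move=> i /andP[iT ne]; apply: f0 (PT i iT) ne.
Qed.

Lemma exprn_le_powR (s : R) (m c : nat) (d : R) :
  1 <= s -> m%:R <= c%:R + d -> s ^+ m <= s ^+ c * s `^ d.
Proof.
move=> s1 lemcd; have s0 : 0 <= s := le_trans ler01 s1.
rewrite -!(powR_mulrn _ s0) -powRD ?(gt_eqF (lt_le_trans ltr01 s1)) ?implybT //.
exact: ler_powR.
Qed.

Variables (n N : nat) (A : 'M[int]_(n, N)).

Lemma phi_surjective G : in_L_dagger nrm A G ->
  exists F, in_Kxy_dagger nrm F /\ phi_maps_to nrm A F G.
Proof.
move=> [r [s [C [r1 [s1 GC]]]]].
have [c short] := short_representation R A.
have short_ex w : exists v : mono N, in_CA A w ->
    expo A v = w /\ (mdeg v)%:R <= c%:R + dA R A w.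
  have [/short[v vw]|notCA] := pselect (in_CA A w); first by exists v.
  by exists [ffun=> 0%N].
have [sel selP] := choice short_ex.
pose F u v := if v == sel (expo A v) then G u (expo A v) else 0.
exists F; split=> [|u w CAw]; last first.
  have [selw _] := selP w CAw.
  have -> : G u w = F u (sel w) by rewrite /F selw eqxx.
  by apply: has_sum_single => // v <- ne; rewrite /F (negbTE ne).
have [nrm_ge0 _ _ _] := nrm_abs.
have r0 : 0 <= r by rewrite ltW // (lt_trans ltr01).
have s0 : 0 <= s by rewrite ltW // (lt_trans ltr01).
have C0 : 0 <= C.
  apply: le_trans (GC [ffun=> 0%N] 0 _); first by rewrite !mulr_ge0 ?exprn_ge0 ?powR_ge0.
  exists [ffun=> 0%N]; apply/matrixP => i j.
  by rewrite !mxE big1 // => l _; rewrite ffunE mul0r.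
exists r, s, (s ^+ c * C); split=> //; split=> // u v; rewrite /F.
have [selv|_] := eqP; last by rewrite nrm0 !mul0r mulr_ge0 ?exprn_ge0.
have [_ degv] := selP _ (ex_intro _ v erefl); rewrite -selv in degv.
apply: le_trans (ler_wpM2l _ (exprn_le_powR (ltW s1) degv)) _.
  by rewrite mulr_ge0 ?exprn_ge0.
by rewrite mulrCA ler_wpM2l ?exprn_ge0 //; apply: GC; exists v.
Qed.

End Surjectivity.

Theorem mainTheorem9 (R : realType) (p : nat) (K : fieldType) (nrm : K -> R)
    (pi : K) (n N : nat) (A : 'M[int]_(n, N)) :
  prime p ->
  is_finite_ext_Qp nrm p ->
  pi ^+ p.-1 + p%:R = 0 ->
  \rank (map_mx (fun z : int => z%:~R : rat) A) = n ->
  (forall G, in_L_dagger nrm A G ->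
     exists F, in_Kxy_dagger nrm F /\ phi_maps_to nrm A F G) /\
  (forall G, in_L_dagger nrm A G ->
     exists P, in_D_dagger nrm P /\ varphi_maps_to nrm A P G).
Proof.
(* Only the absolute-value axioms of nrm are used.  D^dagger and varphi are
   encoded exactly as K<x,y>^dagger and phi, since
   d^v / pi^{|v|} . 1 = t^{sum v_j w_j}. *)
move=> _ [nrm_abs _ _ _ _] _ _.
by split=> G /(phi_surjective nrm_abs).
Qed.
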